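(* Let $\mathcal{R}$ be a right amenable cell space with finite stabiliser $G_0$, let $Q$ be a finite set with at least two elements, and let $\mathcal{F}=(F_i)_{i\in I}$ be a right Følner net in $\mathcal{R}$. Let $X\subseteq Q^M$, let $E,E'$ be nonempty finite subsets of $G/G_0$, and let $T$ be an $(E,E')$-tiling of $\mathcal{R}$ such that for every $t\in T$ we have $\pi_{t\triangleleft E}(X)\subsetneq Q^{t\triangleleft E}$. Then $\mathrm{h}_{\mathcal{F}}(X)<\log|Q|$.
   Context: A cell space $\mathcal{R}$ consists of a group $G$ acting transitively on the left on a nonempty set $M$ via $\triangleright$, a point $m_0\in M$ and a family $(g_{m_0,m})_{m\in M}$ in $G$ with $g_{m_0,m}\triangleright m_0=m$. $G_0$ is the stabiliser of $m_0$ and $G/G_0$ the set of left cosets. The right semi-action $\triangleleft\colon M\times G/G_0\to M$ is $m\triangleleft gG_0=g_{m_0,m}g\triangleright m_0$; $m\triangleleft E=\{m\triangleleft e:e\in E\}$. $\mathcal{R}$ is right amenable if there is a finitely additive probability measure $\mu$ on the power set of $M$ such that $\mu(\{a\triangleleft\mathfrak{g}:a\in A\})=\mu(A)$ whenever $\mathfrak{g}\in G/G_0$, $A\subseteq M$ and $m\mapsto m\triangleleft\mathfrak{g}$ is injective on $A$. A right Følner net in $\mathcal{R}$ is a net $(F_i)_{i\in I}$ (over a directed set) of nonempty finite subsets of $M$ with $\lim_{i}\frac{|F_i\setminus\{m: m\triangleleft\mathfrak{g}\in F_i\}|}{|F_i|}=0$ for every $\mathfrak{g}\in G/G_0$. A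 subset $T\subseteq M$ is an $(E,E')$-tiling if $(t\triangleleft E)_{t\in T}$ is pairwise disjoint and $(t\triangleleft E')_{t\in T}$ covers $M$. For $A\subseteq M$, $\pi_A\colon Q^M\to Q^A$ is restriction; $\mathrm{h}_{\mathcal{F}}(X)=\limsup_{i\in I}\frac{\log|\pi_{F_i}(X)|}{|F_i|}$. *)

From HB Require Import structures.
From mathcomp Require Import all_boot all_order all_algebra.
From mathcomp Require Import finmap.
From mathcomp Require Import all_classical all_reals all_analysis.
Set Implicit Arguments. Unset Strict Implicit. Unset Printing Implicit Defensive.
Import Order.TTheory GRing.Theory Num.Theory.
Local Open Scope classical_set_scope.
Local Open Scope fset_scope.
Local Open Scope ring_scope.

(* A cell space: a group G acting transitively on the left on M, a base
   point m0 and coordinates g_{m0,m} with g_{m0,m} |> m0 = m. *)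
Record cell_space := CellSpace {
  cs_G : Type;
  cs_mul : cs_G -> cs_G -> cs_G;
  cs_inv : cs_G -> cs_G;
  cs_one : cs_G;
  cs_mulA : forall a b c, cs_mul a (cs_mul b c) = cs_mul (cs_mul a b) c;
  cs_mul1g : forall a, cs_mul cs_one a = a;
  cs_mulVg : forall a, cs_mul (cs_inv a) a = cs_one;
  cs_M : choiceType;
  cs_act : cs_G -> cs_M -> cs_M;
  cs_act1 : forall m, cs_act cs_one m = m;
  cs_actM : forall g h m, cs_act (cs_mul g h) m = cs_act g (cs_act h m);
  cs_m0 : cs_M;
  cs_coord : cs_M -> cs_G;
  cs_coordP : forall m, cs_act (cs_coord m) cs_m0 = m
  (* transitivity of the action follows from cs_coordP *)
}.

Section CellSpaceDefs.
Variable R : realType.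
Variable S : cell_space.
Local Notation G := (cs_G S).
Local Notation M := (cs_M S).

Definition stabiliser : set G := [set g | cs_act g (cs_m0 S) = cs_m0 S].

(* right semi-action  m <| gG_0 := g_{m0,m} g |> m0.  An element of G/G_0
   is represented by any of its representatives g (the value does not
   depend on the choice since G_0 fixes m0). *)
Definition rsa (m : M) (g : G) : M := cs_act (cs_mul (cs_coord m) g) (cs_m0 S).

Definition rsa_set (m : M) (E : seq G) : {fset M} := [fset x | x in [seq rsa m g | g <- E]].

Definition right_amenable : Prop :=
  exists mu : set M -> R,
    [/\ (forall A, 0 <= mu A),
        mu setT = 1,
        (forall A B, (A `&` B)%classic = set0 -> mu (A `|` B)%classic = mu A + mu B) &
        (forall (g : G) (A : set M),
            (forall a b, A a -> A b -> rsa a g = rsa b g -> a = b) ->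
            mu [set rsa a g | a in A] = mu A)].

Definition directed {I : Type} (le : I -> I -> Prop) : Prop :=
  [/\ inhabited I, (forall i, le i i),
      (forall i j k, le i j -> le j k -> le i k) &
      (forall i j, exists k, le i k /\ le j k)].

Definition net_to0 {I : Type} (le : I -> I -> Prop) (a : I -> R) : Prop :=
  forall eps : R, 0 < eps -> exists i0, forall i, le i0 i -> `|a i| < eps.

Definition right_folner {I : Type} (le : I -> I -> Prop) (F : I -> {fset M}) : Prop :=
  (forall i, F i != fset0) /\
  forall g : G,
    net_to0 le (fun i =>
      (#|` [fset m in F i | rsa m g \notin F i]|)%:R / (#|` F i|)%:R).

Definition tiling (E E' : seq G) (T : set M) : Prop :=
  (forall t t', T t -> T t' -> t <> t' ->
     [disjoint rsa_set t E & rsa_set t' E]%fset) /\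
  (forall m, exists2 t, T t & m \in rsa_set t E').

End CellSpaceDefs.

Definition patproj {M : choiceType} {Q : finType} (A : {fset M}) (X : set (M -> Q))
  : {set {ffun A -> Q}} :=
  [set f : {ffun A -> Q} | `[< exists2 x, X x & forall a : A, f a = x (fsval a) >]].

Definition net_limsup {R : realType} {I : Type} (le : I -> I -> Prop) (a : I -> R) : \bar R :=
  ereal_inf [set ereal_sup [set (a j)%:E | j in [set j | le i j]] | i in [set: I]].

Definition entropy {R : realType} {I : Type} (le : I -> I -> Prop) {M : choiceType} {Q : finType}
  (F : I -> {fset M}) (X : set (M -> Q)) : \bar R :=
  net_limsup le (fun i => ln (#|patproj (F i) X|)%:R / (#|` F i|)%:R).

From HB Require Import structures.
From mathcomp Require Import all_boot all_order all_algebra.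
From mathcomp Require Import finmap.
From mathcomp Require Import all_classical all_reals all_analysis.
From mathcomp Require Import lra.
Set Implicit Arguments. Unset Strict Implicit. Unset Printing Implicit Defensive.
Import Order.TTheory GRing.Theory Num.Theory.
Local Open Scope classical_set_scope.
Local Open Scope ring_scope.

(* Every m lies in some tile t <| E' with t in T, and then t <| E is contained in
   m <| P for the finite set P = G_0 E'^-1 E.  In a Folner set F all but at most
   |F|/2 points m satisfy m <| P within F, so at least |F| / (2 |E'|) distinct tiles
   t <| E lie inside F.  These tiles are disjoint and each carries at most
   |Q|^|E| - 1 patterns of X, hence |pi_F(X)| <= (1 - |Q|^-|E|)^(|F| / (2|E'|)) |Q|^|F|,
   and log |pi_F(X)| / |F| stays below log |Q| by a fixed margin. *)

Section PatternCount.
Variables (M : choiceType) (Q : finType) (Y : set (M -> Q)).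

Lemma in_patproj (A : {fset M}) (f : {ffun A -> Q}) :
  f \in patproj A Y <-> exists2 x, Y x & forall a : A, f a = x (fsval a).
Proof. by rewrite inE; split => [/asboolP|?]; last apply/asboolP. Qed.

Lemma card_patproj_le (A : {fset M}) : (#|patproj A Y| <= #|Q| ^ #|` A|)%N.
Proof. by apply: leq_trans (max_card _) _; rewrite card_ffun cardfE. Qed.

Lemma card_patproj_proper (A : {fset M}) :
  (patproj A Y \proper [set: {ffun A -> Q}])%SET -> (#|patproj A Y| < #|Q| ^ #|` A|)%N.
Proof. by move/proper_card; rewrite cardsT card_ffun cardfE. Qed.

Lemma card_patprojU (A B : {fset M}) :
  (#|patproj (A `|` B)%fset Y| <= #|patproj A Y| * #|patproj B Y|)%N.
Proof.
pose restr (f : {ffun (A `|` B)%fset -> Q}) :=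
  ([ffun a => f (fincl (fsubsetUl A B) a)] : {ffun A -> Q},
   [ffun b => f (fincl (fsubsetUr A B) b)] : {ffun B -> Q}).
have restr_inj : injective restr.
  move=> f g [fgA fgB]; apply/ffunP => c.
  have /fsetUP[cA|cB] := fsvalP c.
  - have := congr1 (fun h : {ffun A -> Q} => h [` cA]%fset) fgA; rewrite !ffunE.
    by have -> : fincl (fsubsetUl A B) [` cA]%fset = c by apply: val_inj.
  - have := congr1 (fun h : {ffun B -> Q} => h [` cB]%fset) fgB; rewrite !ffunE.
    by have -> : fincl (fsubsetUr A B) [` cB]%fset = c by apply: val_inj.
rewrite -cardsX -(card_imset _ restr_inj); apply: subset_leq_card.
apply/fintype.subsetP => _ /imsetP[f /in_patproj[x Yx fx] ->].
by rewrite inE; apply/andP; split; apply/in_patproj; exists x => // a; rewrite ffunE fx.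
Qed.

End PatternCount.

Section PatternDensity.
Variables (R : realType) (M : choiceType) (Q : finType) (Y : set (M -> Q)).
Hypothesis Q_gt0 : (0 < #|Q|)%N.

Definition pattern_density (D : {fset M}) : R :=
  #|patproj D Y|%:R / (#|Q| ^ #|` D|)%:R.

Lemma card_patterns_gt0 (n : nat) : 0 < (#|Q| ^ n)%:R :> R.
Proof. by rewrite ltr0n expn_gt0 Q_gt0. Qed.

Lemma pattern_density_ge0 (D : {fset M}) : 0 <= pattern_density D.
Proof. by rewrite divr_ge0. Qed.

Lemma pattern_density_le1 (D : {fset M}) : pattern_density D <= 1.
Proof.
by rewrite ler_pdivrMr ?card_patterns_gt0 // mul1r ler_nat card_patproj_le.
Qed.

Lemma pattern_density_proper (A : {fset M}) (s : nat) :
  (#|` A| <= s)%N -> (patproj A Y \proper [set: {ffun A -> Q}])%SET ->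
  pattern_density A <= 1 - ((#|Q| ^ s)%:R)^-1.
Proof.
move=> As /card_patproj_proper; rewrite -(ler_nat R) -addn1 natrD => lt_AY.
have qA := card_patterns_gt0 #|` A|; have qs := card_patterns_gt0 s.
have qAs : (#|Q| ^ #|` A|)%:R / (#|Q| ^ s)%:R <= 1 :> R.
  by rewrite ler_pdivrMr // mul1r ler_nat leq_pexp2l.
rewrite ler_pdivrMr // mulrBl mul1r mulrC; lra.
Qed.

Lemma pattern_densityU (A B : {fset M}) : [disjoint A & B]%fset ->
  pattern_density (A `|` B)%fset <= pattern_density A * pattern_density B.
Proof.
move=> dAB; have /eqP cardAB : #|` (A `|` B)%fset| == (#|` A| + #|` B|)%N.
  by rewrite (leq_card_fsetU A B).2.
rewrite /pattern_density mulf_div cardAB expnD natrM ler_wpM2r ?invr_ge0 //.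
by rewrite -natrM ler_nat card_patprojU.
Qed.

Lemma pattern_density_tiles (J : eqType) (A : J -> {fset M}) (rho : R) (ts : seq J)
    (D : {fset M}) : 0 <= rho -> uniq ts ->
  (forall t, t \in ts -> (A t `<=` D)%fset) ->
  {in ts &, forall t t', t != t' -> [disjoint A t & A t']%fset} ->
  (forall t, t \in ts -> pattern_density (A t) <= rho) ->
  pattern_density D <= rho ^+ size ts.
Proof.
move=> rho_ge0; elim: ts D => [|t ts IH] D /=; first by rewrite expr0 pattern_density_le1.
move=> /andP[t_ts uts] AD disj dens.
have tts y : y \in ts -> y \in t :: ts by rewrite inE => ->; rewrite orbT.
have AtD := AD t (mem_head _ _).
have -> : D = (A t `|` (D `\` A t))%fset.
  by apply/fsetP=> x; rewrite !inE; case: (boolP (x \in A t)) => //= /(fsubsetP AtD).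
have AtDt : [disjoint A t & D `\` A t]%fset by apply/fdisjointP => x xA; rewrite !inE xA.
rewrite exprS; apply: le_trans (pattern_densityU AtDt) _.
apply: ler_pM; rewrite ?pattern_density_ge0 ?dens ?mem_head //.
apply: IH => // [t' t'_ts||t' t'_ts]; last 2 first.
- by move=> a b /tts a_ts /tts b_ts; apply: disj.
- by apply: dens; apply: tts.
apply/fsubsetP => x xA; rewrite !inE (fsubsetP (AD t' (tts _ t'_ts)) x xA) andbT.
have tt' : t != t' by apply: contraNneq t_ts => ->.
by apply: (fdisjointP_sym (disj _ _ (mem_head _ _) (tts _ t'_ts) tt')).
Qed.

End PatternDensity.

Section Nets.
Variables (I : Type) (le : I -> I -> Prop).

Lemma directed_eventually_all (J : eqType) (r : seq J) (P : J -> I -> Prop) :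
  directed le -> (forall j, j \in r -> exists i0, forall i, le i0 i -> P j i) ->
  exists i0, forall i, le i0 i -> forall j, j \in r -> P j i.
Proof.
case=> [[i_any] _ le_tr le_dir]; elim: r => [|j r IH] evP; first by exists i_any.
have [i1 Pj] := evP j (mem_head _ _).
have [i2 Pr] : exists i0, forall i, le i0 i -> forall j', j' \in r -> P j' i.
  by apply: IH => j' j'r; apply: evP; rewrite inE j'r orbT.
have [k [i1k i2k]] := le_dir i1 i2.
exists k => i ki j'; rewrite inE => /predU1P[->|j'r].
- exact/Pj/(le_tr _ _ _ i1k ki).
- exact: Pr (le_tr _ _ _ i2k ki) _ j'r.
Qed.

Lemma net_limsup_le (R : realType) (a : I -> R) (b : R) :
  (exists i0, forall i, le i0 i -> a i <= b) -> (net_limsup le a <= b%:E)%E.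
Proof.
move=> [i0 ab]; apply: le_trans (ereal_inf_lbound _) _; first by exists i0.
by apply: ge_ereal_sup => _ [i i0i <-]; rewrite lee_fin ab.
Qed.

End Nets.

(* The maximum with 0 covers N = 0, where ln 0 = 0. *)
Lemma ln_div_le_max (R : realType) (N n k : nat) (q rho c : R) :
  (0 < n)%N -> 0 < q -> 0 < rho <= 1 ->
  N%:R <= rho ^+ k * q ^+ n -> n%:R * c <= k%:R ->
  ln N%:R / n%:R <= Num.max (ln q + c * ln rho) 0.
Proof.
move=> n_gt0 q_gt0 /andP[rho_gt0 rho_le1] N_le nc_le_k.
have [->|N_gt0] := posnP N; first by rewrite ln0 // mul0r le_max lexx orbT.
rewrite le_max ler_pdivrMr ?ltr0n //; apply/orP; left.
have lnN : ln N%:R <= k%:R * ln rho + n%:R * ln q.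
  rewrite !mulr_natl -!lnXn // -lnM ?posrE ?exprn_gt0 // ler_ln ?posrE ?ltr0n //.
  by rewrite mulr_gt0 ?exprn_gt0.
have lnrho : ln rho <= 0 by rewrite ln_le0.
have := ler_wnM2r lnrho nc_le_k; lra.
Qed.

Lemma card_bigfcup_le (K : choiceType) (J : Type) (r : seq J) (A : J -> {fset K}) (c : nat) :
  (forall j, #|` A j| <= c)%N -> (#|` (\bigcup_(j <- r) A j)%fset| <= size r * c)%N.
Proof.
move=> Ac; elim: r => [|j r IH]; first by rewrite big_nil cardfs0.
by rewrite big_cons mulSn (leq_trans (leq_card_fsetU _ _).1) ?leq_add.
Qed.

Section CellSpace.
Variable S : cell_space.
Local Notation G := (cs_G S).
Local Notation Gc := {classic (cs_G S)}.
Local Notation M := (cs_M S).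
Local Notation mul := (@cs_mul S).
Local Notation inv := (@cs_inv S).
Local Notation one := (@cs_one S).

Lemma cs_mulgV (a : G) : mul a (inv a) = one.
Proof.
have aV : mul (inv (inv a)) (inv a) = one by rewrite cs_mulVg.
by rewrite -[mul a _]cs_mul1g -{1}aV -cs_mulA (cs_mulA (inv a)) cs_mulVg cs_mul1g.
Qed.

Lemma cs_mulg1 (a : G) : mul a one = a.
Proof. by rewrite -(cs_mulVg a) cs_mulA cs_mulgV cs_mul1g. Qed.

Lemma rsa_setP (t x : M) (E : seq Gc) :
  reflect (exists2 e, e \in E & x = rsa t e) (x \in rsa_set t E).
Proof. by rewrite inE; apply: mapP. Qed.

Lemma card_rsa_set_le (t : M) (E : seq G) : (#|` rsa_set t E| <= size E)%N.
Proof. by rewrite card_fseq (leq_trans (size_undup _)) ?size_map. Qed.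

Lemma rsa_rebase (t m : M) (e' : G) : m = rsa t e' ->
  exists2 h, stabiliser h & forall e, rsa t e = rsa m (mul (mul h (inv e')) e).
Proof.
move=> me'; exists (mul (inv (cs_coord m)) (mul (cs_coord t) e')) => [|e].
  rewrite /stabiliser /= cs_actM -/(rsa t e') -me' -{2}(cs_coordP m).
  by rewrite -cs_actM cs_mulVg cs_act1.
by rewrite /rsa !cs_mulA cs_mulgV cs_mul1g -(cs_mulA _ e') cs_mulgV cs_mulg1.
Qed.

Definition rsa_boundary (D : {fset M}) (P : seq Gc) : {fset M} :=
  [fset m in D | has (fun g : Gc => rsa m g \notin D) P]%fset.

Lemma card_rsa_boundary_le (D : {fset M}) (P : seq Gc) :
  (#|` rsa_boundary D P| <= \sum_(g <- P) #|` [fset m in D | rsa m g \notin D]%fset|)%N.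
Proof.
elim: P => [|g P IH].
  by rewrite big_nil leqn0 cardfs_eq0; apply/eqP/fsetP => x; rewrite !inE andbF.
rewrite big_cons (leq_trans _ (leq_add (leqnn _) IH)) // (leq_trans _ (leq_card_fsetU _ _).1) //.
by apply: fsubset_leq_card; apply/fsubsetP => x; rewrite !inE /= andb_orr.
Qed.

Lemma folner_boundary_small (R : realType) (I : Type) (le : I -> I -> Prop)
    (F : I -> {fset M}) (P : seq Gc) :
  directed le -> right_folner R le F ->
  exists i0, forall i, le i0 i -> (#|` rsa_boundary (F i) P|%:R : R) <= #|` F i|%:R / 2.
Proof.
move=> dir [F_neq0 F_folner].
pose eps : R := ((2 * (size P).+1)%:R)^-1.
have eps_gt0 : 0 < eps by rewrite invr_gt0 ltr0n.
have F_gt0 i : 0 < #|` F i|%:R :> R by rewrite ltr0n cardfs_gt0.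
have [|i0 small] := @directed_eventually_all _ _ _ P
  (fun g i => (#|` [fset m in F i | rsa m g \notin F i]%fset|%:R : R) <= eps * #|` F i|%:R) dir.
  move=> g _; have [i0 Fi0] := F_folner g eps eps_gt0; exists i0 => i /Fi0.
  by rewrite ger0_norm ?divr_ge0 // ltr_pdivrMr // => /ltW.
exists i0 => i /small {}small.
have eps_size : eps * (size P)%:R <= 2^-1.
  have : (size P)%:R <= (size P).+1%:R :> R by rewrite ler_nat.
  move/(ler_wpM2l (ltW eps_gt0))/le_trans; apply.
  by rewrite /eps natrM invfM -mulrA mulVf ?mulr1 // pnatr_eq0.
have := card_rsa_boundary_le (F i) P; rewrite -(ler_nat R) natr_sum => /le_trans -> //.
rewrite big_seq (le_trans (ler_sum _ small)) // -big_seq big_const_seq count_predT.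
rewrite iter_addr_0 -mulrnAl -[eps *+ _]mulr_natr [_ / 2]mulrC.
by rewrite ler_wpM2r // ltW.
Qed.
End CellSpace.

Section Tiling.
Variables (S : cell_space) (E E' : seq (cs_G S)) (T : set (cs_M S)).
Local Notation Gc := {classic (cs_G S)}.
Local Notation M := (cs_M S).
Local Notation mul := (@cs_mul S).
Local Notation inv := (@cs_inv S).
Hypothesis T_disjoint : forall t t', T t -> T t' -> t <> t' ->
  [disjoint rsa_set t E & rsa_set t' E]%fset.
Hypothesis T_cover : forall m, exists2 t, T t & m \in rsa_set t E'.
Variable Hs : seq Gc.
Hypothesis stabiliser_Hs : forall h, stabiliser h -> h \in Hs.

Definition tile (m : M) : M := s2val (cid2 (T_cover m)).

Lemma tileT (m : M) : T (tile m).
Proof. exact: (s2valP (cid2 (T_cover m))). Qed.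

Lemma tile_cover (m : M) : m \in rsa_set (tile m) E'.
Proof. exact: (s2valP' (cid2 (T_cover m))). Qed.

Definition tile_shifts : seq Gc :=
  [seq mul he' e | he' <- [seq mul h (inv e') | h <- Hs, e' <- (E' : seq Gc)],
                   e <- (E : seq Gc)].

Lemma tile_sub (D : {fset M}) (m : M) :
  (forall g, g \in tile_shifts -> rsa m g \in D) -> (rsa_set (tile m) E `<=` D)%fset.
Proof.
move=> mD; apply/fsubsetP => _ /rsa_setP[e eE ->].
have /rsa_setP[e' e'E' /rsa_rebase[h /stabiliser_Hs hHs ->]] := tile_cover m.
apply/mD/(@allpairs_f Gc Gc Gc) => //; exact: (@allpairs_f Gc Gc Gc).
Qed.

Definition tile_interior (D : {fset M}) : {fset M} := (D `\` rsa_boundary D tile_shifts)%fset.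

Definition tiles (D : {fset M}) : {fset M} := [fset tile m | m in tile_interior D]%fset.

Lemma tiles_sub (D : {fset M}) (t : M) : t \in tiles D -> (rsa_set t E `<=` D)%fset.
Proof.
move=> /imfsetP[m /= + ->]; rewrite !inE => /andP[m_int mD].
apply: tile_sub => g g_sh; apply: contraNT m_int => gD.
by rewrite mD; apply/hasP; exists g.
Qed.

Lemma card_tile_interior_le (D : {fset M}) :
  (#|` tile_interior D| <= #|` tiles D| * size E')%N.
Proof.
apply: leq_trans (card_bigfcup_le (tiles D) (fun t => card_rsa_set_le t E')).
apply/fsubset_leq_card/fsubsetP => m m_int; apply/bigfcupP.
by exists (tile m); rewrite ?tile_cover // andbT; apply/imfsetP; exists m.
Qed.

Lemma pattern_density_tiles_le (R : realType) (Q : finType) (X : set (M -> Q))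
    (D : {fset M}) : (0 < #|Q|)%N ->
  (forall t, T t -> (patproj (rsa_set t E) X \proper [set: {ffun rsa_set t E -> Q}])%SET) ->
  pattern_density R X D <= (1 - ((#|Q| ^ size E)%:R)^-1) ^+ #|` tiles D|.
Proof.
move=> Q_gt0 X_proper.
apply: (@pattern_density_tiles _ _ _ X Q_gt0 _ (fun t => rsa_set t E))
  _ (fset_uniq _) (@tiles_sub D) _ _.
- by rewrite subr_ge0 invf_le1 ?card_patterns_gt0 // ler1n expn_gt0 Q_gt0.
- move=> _ _ /imfsetP[m _ ->] /imfsetP[m' _ ->] /eqP tmm'.
  exact: T_disjoint (tileT m) (tileT m') tmm'.
- move=> _ /imfsetP[m _ ->].
  exact: pattern_density_proper (card_rsa_set_le _ _) (X_proper _ (tileT m)).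
Qed.

Lemma many_tiles (R : realType) (D : {fset M}) :
  (#|` rsa_boundary D tile_shifts|%:R : R) <= #|` D|%:R / 2 ->
  #|` D|%:R * ((2 * size E')%:R)^-1 <= #|` tiles D|%:R :> R.
Proof.
move=> bnd_small; have [->|E'_gt0] := posnP (size E'); first by rewrite muln0 invr0 mulr0.
have card_D : #|` D| = (#|` tile_interior D| + #|` rsa_boundary D tile_shifts|)%N.
  rewrite -(cardfsID (rsa_boundary D tile_shifts) D) addnC; congr (_ + #|` _|)%N.
  by apply/fsetIidPr/fsubsetP => m; rewrite inE => /andP[].
have := card_tile_interior_le D; rewrite -(ler_nat R) natrM.
rewrite ler_pdivrMr ?ltr0n ?muln_gt0 // natrM card_D natrD.
move: bnd_small; rewrite card_D natrD; lra.
Qed.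

End Tiling.

Theorem lemma9 (R : realType) (S : cell_space)
  (amen : right_amenable R S)
  (G0fin : finite_set (@stabiliser S))
  (Q : finType) (hQ : (1 < #|Q|)%N)
  (I : Type) (le : I -> I -> Prop) (hI : directed le)
  (F : I -> {fset cs_M S}) (hF : @right_folner R S I le F)
  (X : set (cs_M S -> Q))
  (E E' : seq (cs_G S)) (hE : E <> [::]) (hE' : E' <> [::])
  (T : set (cs_M S)) (hT : @tiling S E E' T)
  (hproper : forall t, T t ->
     (patproj (@rsa_set S t E) X \proper [set: {ffun @rsa_set S t E -> Q}])%SET) :
  (@entropy R I le (cs_M S) Q F X < (ln (#|Q|%:R : R))%:E)%E.
Proof.
have [Hs stab_Hs] : exists Hs : seq {classic (cs_G S)}, forall h, stabiliser h -> h \in Hs.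
  by have [Hs ->] := (@finite_seqP {classic (cs_G S)} _).1 G0fin; exists Hs.
case: hT => T_disj T_cover; have Q_gt0 : (0 < #|Q|)%N by apply: ltn_trans hQ.
pose rho : R := 1 - ((#|Q| ^ size E)%:R)^-1.
have rho01 : 0 < rho < 1.
  have QE_gt1 : 1 < (#|Q| ^ size E)%:R :> R.
    rewrite ltr1n (leq_trans hQ) // -[X in (X <= _)%N]expn1 leq_pexp2l //.
    by case: (E) hE.
  by rewrite ltrBlDr ltrDl invr_gt0 subr_gt0 invf_lt1 ?(lt_trans ltr01) ?QE_gt1.
have [i0 small] := folner_boundary_small (tile_shifts E E' Hs) hI hF.
pose c : R := ((2 * size E')%:R)^-1.
rewrite /entropy; apply: (@le_lt_trans _ _ (Num.max (ln #|Q|%:R + c * ln rho) 0)%:E).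
  apply: net_limsup_le; exists i0 => i /small F_small.
  apply: ln_div_le_max _ _ _ _ (many_tiles T_cover F_small).
  - by rewrite cardfs_gt0 hF.1.
  - by rewrite ltr0n.
  - by case/andP: rho01 => -> /ltW.
  - rewrite -natrX -ler_pdivrMr ?card_patterns_gt0 //.
    exact: pattern_density_tiles_le.
rewrite lte_fin gt_max ln_gt0 ?ltr1n // andbT gtrDl pmulr_rlt0 ?ln_lt0 //.
by rewrite /c invr_gt0 ltr0n muln_gt0; case: (E') hE'.
Qed.
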